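(* If $[w,n] \in \mathbb{W}$ and $\alpha \vDash \ell(w)$ are such that $\mathrm{Des}(w) = I(\alpha)$ then $\Psi_{\leq}([w,n]) = L_\alpha$, $\Psi_{>}([w,n]) = L_{\alpha^{\tt c}}$, $\Psi_{\geq}([w^{\tt r},n]) = L_{\alpha^{\tt r}}$, and $\Psi_{<}([w^{\tt r},n]) = L_{\alpha^{\tt t}}$.
   Context: Let $\Bbbk$ be a field. For a word $w=w_1\cdots w_m$ of positive integers with $\max(w)\le n$, $[w,n]$ is the linear endomorphism of the $\Bbbk$-span of all words sending a word $v$ of length $n$ to $v_{w_1}\cdots v_{w_m}$ and others to $0$; $\mathbb{W}$ is the set of these and $\textbf{W}$ their span, a graded bialgebra (degree $\ell(w)$) with product $[v,m]\otimes[w,n]\mapsto[v\sqcup\!\sqcup(w\uparrow m),m+n]$ and deconcatenation coproduct $\Delta_\odot([w,n])=\sum_i[w_1\cdots w_i,n]\otimes[w_{i+1}\cdots w_m,n]$, counit $1$ on $[\emptyset,n]$ and $0$ otherwise. Let $\zeta_\le:\textbf{W}\to\Bbbk$ send $[w,n]$ to $1$ if $w$ is weakly increasing and $0$ otherwise; $\zeta_\ge,\zeta_<,\zeta_>$ are defined likewise with weakly decreasing, strictly increasing, strictly decreasing. For $\bullet\in\{\le,\ge,<,>\}$, $\Psi_\bullet:\textbf{W}\to\textsf{QSym}$ is $\Psi_\bullet(x)=\sum_\alpha(\zeta_\bullet)_\alpha(x)M_\alpha$, where $M_\alpha$ is the monomial quasi-symmetric function and, for $\alpha=(\alpha_1,\dots,\alpha_m)$,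 $(\zeta_\bullet)_\alpha$ is the iterated coproduct into $\textbf{W}^{\otimes m}$, followed by projection onto degrees $\alpha_1,\dots,\alpha_m$, $\zeta_\bullet^{\otimes m}$, and multiplication (with $(\zeta_\bullet)_\emptyset$ the counit); it is the unique combinatorial bialgebra morphism $(\textbf{W},\zeta_\bullet)\to(\textsf{QSym},\zeta_{\textsf{QSym}})$. For $\alpha=(\alpha_1,\dots,\alpha_l)\vDash n$, $I(\alpha)=\{\alpha_1,\alpha_1+\alpha_2,\dots,\alpha_1+\cdots+\alpha_{l-1}\}$; $L_\alpha=\sum_{I(\alpha)\subseteq I(\beta)}M_\beta$ is the fundamental quasi-symmetric function; $\alpha^{\tt r}=(\alpha_l,\dots,\alpha_1)$, $\alpha^{\tt c}$ is the composition with $I(\alpha^{\tt c})=\{1,\dots,n-1\}\setminus I(\alpha)$, $\alpha^{\tt t}=(\alpha^{\tt r})^{\tt c}$. For a word $w$, $w^{\tt r}$ is its reversal and $\mathrm{Des}(w)=\{i:w_i>w_{i+1}\}$. *)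

From HB Require Import structures.
From mathcomp Require Import all_boot all_order all_algebra.
Set Implicit Arguments. Unset Strict Implicit. Unset Printing Implicit Defensive.
Import GRing.Theory.
Local Open Scope ring_scope.

Definition is_comp (alpha : seq nat) : bool := all (fun a => (0 < a)%N) alpha.

Definition Ilist (alpha : seq nat) : seq nat :=
  [seq sumn (take j alpha) | j <- iota 1 (size alpha).-1].

(* Des(w) = {i : w_i > w_{i+1}}, positions 1-indexed, 1 <= i <= l(w)-1 *)
Definition Des (w : seq nat) (i : nat) : bool :=
  [&& (0 < i)%N, (i < size w)%N & (nth 0%N w i < nth 0%N w i.-1)%N].

(* the composition of n whose set I(.) is S \cap {1,...,n-1} *)
Definition comp_of_set (n : nat) (S : pred nat) : seq nat :=
  if n == 0%N then [::]
  else pairmap (fun a b => b - a)%N 0%N (rcons [seq i <- iota 1 n.-1 | S i] n).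

Definition compl (alpha : seq nat) : seq nat :=
  comp_of_set (sumn alpha) (fun i => i \notin Ilist alpha).
Definition transp (alpha : seq nat) : seq nat := compl (rev alpha).

Inductive zeta_kind := Zle | Zge | Zlt | Zgt.

Definition zeta_rel (z : zeta_kind) : rel nat :=
  match z with
  | Zle => fun a b => (a <= b)%N
  | Zge => fun a b => (b <= a)%N
  | Zlt => fun a b => (a < b)%N
  | Zgt => fun a b => (b < a)%N
  end.

Definition zeta (k : fieldType) (z : zeta_kind) (u : seq nat) : k :=
  (sorted (zeta_rel z) u)%:R.

(* An element of QSym over k is represented by its coordinate function in the
   monomial basis: F = sum_beta F(beta) M_beta (F(beta) = 0 off compositions). *)
Definition QSym (k : fieldType) := seq nat -> k.

Definition M (k : fieldType) (alpha : seq nat) : QSym k :=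
  fun beta => ((beta == alpha) && is_comp alpha)%:R.

Definition L (k : fieldType) (alpha : seq nat) : QSym k :=
  fun beta => [&& is_comp beta, sumn beta == sumn alpha &
                  all (fun i => i \in Ilist beta) (Ilist alpha)]%:R.

(* (zeta)_beta([w,n]): iterated deconcatenation coproduct into m = l(beta)
   tensor factors, projection onto degrees beta_1,...,beta_m, then
   zeta^{\otimes m} and multiplication.  The only surviving term is the
   splitting of w into consecutive factors of lengths beta_1,...,beta_m. *)
Definition zeta_comp (k : fieldType) (z : zeta_kind) (beta : seq nat)
    (w : seq nat) (n : nat) : k :=
  if sumn beta == size w then \prod_(u <- reshape beta w) zeta k z u else 0.

Definition Psi (k : fieldType) (z : zeta_kind) (w : seq nat) (n : nat) : QSym k :=
  fun beta => if is_comp beta then zeta_comp k z beta w n else 0.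

From mathcomp Require Import all_boot all_order all_algebra zify.
From Stdlib Require Import FunctionalExtensionality.
Set Implicit Arguments. Unset Strict Implicit. Unset Printing Implicit Defensive.
Import GRing.Theory.

(* Cutting a word v into consecutive blocks of lengths beta, the coefficient of
   M_beta in Psi_z([v,n]) is 1 exactly when every block is z-sorted, i.e. when
   every break of v (a position i where v_{i-1} z v_i fails) is a cut point of
   beta, an element of I(beta).  The coefficient of M_beta in L_gamma is 1
   exactly when I(gamma) is contained in I(beta).  Hence Psi_z([v,n]) = L_gamma
   whenever I(gamma) is the set of z-breaks of v.  For <= the breaks of w are
   its descents I(alpha), for > its non-descents I(alpha^c); reversing the word
   reflects the positions (i -> l(w) - i) and reverses the relation, which
   turns these into I(alpha^r) for >= and I(alpha^t) for <. *)

Definition breaks (r : rel nat) (v : seq nat) (i : nat) : bool :=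
  (0 < i < size v) && ~~ r (nth 0 v i.-1) (nth 0 v i).

Lemma sorted_breaksP r s : reflect (forall i, ~~ breaks r s i) (sorted r s).
Proof.
apply: (iffP (sortedP 0)) => H.
  by case=> [|i] //; rewrite /breaks /= negb_and negbK; case: ltnP => //= /H.
by move=> i hi; move: (H i.+1); rewrite /breaks /= hi negbK.
Qed.

Lemma breaks_take r v b i : breaks r (take b v) i = (i < b) && breaks r v i.
Proof.
rewrite /breaks size_take_min leq_min; case: (ltnP i b) => hib; last by rewrite !andbF.
by rewrite !nth_take ?(leq_ltn_trans (leq_pred i)) //= andbA.
Qed.

Lemma breaks_drop r v b j : breaks r (drop b v) j = (0 < j) && breaks r v (b + j).
Proof.
rewrite /breaks size_drop !nth_drop; case: j => [|j] //=.
by rewrite addnS /= ltn_subRL addnS.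
Qed.

Lemma breaks_rev r v i : breaks r (rev v) i = breaks (fun a b => r b a) v (size v - i).
Proof.
rewrite /breaks size_rev; have [hi|hi] := boolP (0 < i < size v); last first.
  by have -> : (0 < size v - i < size v) = false by apply/negbTE; lia.
have -> : 0 < size v - i < size v by lia.
by rewrite !nth_rev ?prednK ?subnS //; lia.
Qed.

Lemma mem_Ilist_cons b bs i : (i \in Ilist (b :: bs)) =
  (bs != [::]) && ((i == b) || (b <= i) && (i - b \in Ilist bs)).
Proof.
case: bs => [|c bs] //; rewrite /Ilist /= addn0 in_cons (iotaDl 1 1) -map_comp.
apply: orb_id2l => _; apply/mapP/andP => [[j hj ->]|[hbi hi]].
  by rewrite /= add0n leq_addr addKn; split=> //; apply: map_f.
by case/mapP: hi => j hj hij; exists j => //=; rewrite add0n -hij subnKC.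
Qed.

Lemma all_sorted_reshapeP r beta v : sumn beta = size v ->
  reflect (forall i, breaks r v i -> i \in Ilist beta) (all (sorted r) (reshape beta v)).
Proof.
elim: beta v => [|b bs IH] v /= hv.
  by apply: (iffP idP) => // _ i; rewrite /breaks -hv andbF.
have {}IH := IH (drop b v) ltac:(by rewrite size_drop -hv addKn).
apply: (iffP andP) => [[/sorted_breaksP hb /IH hbs] i hi|H]; last split.
- rewrite mem_Ilist_cons; case: (ltngtP i b) => hib /=.
  + by move: (hb i); rewrite breaks_take hib hi.
  + have := hbs (i - b); rewrite breaks_drop subnKC ?(ltnW hib) // subn_gt0 hib hi => /(_ isT).
    by case: bs {IH hbs hv}.
  + move: hi; rewrite hib /breaks -hv => /andP[/andP[_]].
    by case: bs {IH hbs hv} => //=; rewrite addn0 ltnn.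
- apply/sorted_breaksP => i; rewrite breaks_take; apply/negP => /andP[hib /H].
  by rewrite mem_Ilist_cons eqn_leq [b <= i]leqNgt hib /= !andbF.
- apply/IH => j; rewrite breaks_drop => /andP[hj /H].
  by rewrite mem_Ilist_cons -{2}[b]addn0 eqn_add2l eqn0Ngt hj leq_addr addKn andbC => /andP[].
Qed.

Lemma PsiE (k : fieldType) z v n beta : Psi k z v n beta =
  [&& is_comp beta, sumn beta == size v & all (sorted (zeta_rel z)) (reshape beta v)]%:R%R.
Proof.
rewrite /Psi /zeta_comp; case: is_comp => //=; case: eqP => //= _.
elim: (reshape beta v) => [|u s IH]; first by rewrite big_nil.
by rewrite big_cons IH /zeta -natrM mulnb.
Qed.

Lemma Psi_eq_L (k : fieldType) z v n gamma : sumn gamma = size v ->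
    (forall i, (i \in Ilist gamma) = breaks (zeta_rel z) v i) ->
  Psi k z v n = L k gamma.
Proof.
move=> hs hI; apply: functional_extensionality => beta.
rewrite PsiE /L hs; case: is_comp => //=; case: eqP => //= hb.
congr (nat_of_bool _)%:R%R; apply/(all_sorted_reshapeP _ hb)/allP => H i.
  by rewrite hI; apply: H.
by rewrite -hI; apply: H.
Qed.

Lemma breaks_Zle v : breaks (zeta_rel Zle) v =1 Des v.
Proof. by move=> i; rewrite /breaks /Des -ltnNge andbA. Qed.

Lemma breaks_Zgt v i : breaks (zeta_rel Zgt) v i = (0 < i < size v) && ~~ Des v i.
Proof. by rewrite /breaks /Des; case: (0 < i); case: (i < size v). Qed.

Lemma sumn_take_le s j : sumn (take j s) <= sumn s.
Proof. by rewrite -{2}(cat_take_drop j s) sumn_cat leq_addr. Qed.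

Lemma sumn_take_rev s j : j <= size s ->
  sumn (take j (rev s)) = sumn s - sumn (take (size s - j) s).
Proof.
by move=> hj; rewrite take_rev sumn_rev -[in sumn s](cat_take_drop (size s - j) s) sumn_cat addKn.
Qed.

Lemma mem_Ilist_rev a i : (i \in Ilist (rev a)) = (i <= sumn a) && (sumn a - i \in Ilist a).
Proof.
rewrite /Ilist size_rev; apply/mapP/andP => [[j + ->]|[hi /mapP[j + hji]]];
  rewrite mem_iota => hj.
- rewrite sumn_take_rev ?subKn ?sumn_take_le //; last lia.
  split; first exact: leq_subr.
  by apply/mapP; exists (size a - j) => //; rewrite mem_iota; lia.
- exists (size a - j); first by rewrite mem_iota; lia.
  rewrite sumn_take_rev ?leq_subr // subKn; last lia.
  by rewrite -hji subKn.
Qed.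

Lemma sumn_take_pairmap_subn x0 t j : sorted leq (x0 :: t) -> j <= size t ->
  sumn (take j (pairmap (fun a b => b - a) x0 t)) = nth x0 (x0 :: t) j - x0.
Proof.
elim: t x0 j => [|y t IH] x0 [|j] //= hp hj; rewrite ?subnn //.
case/andP: hp => hxy hyt; rewrite IH //.
have hyz : y <= nth y (y :: t) j.
  by apply: (@sorted_leq_nth _ _ leq_trans leqnn y (y :: t) hyt 0 j); rewrite ?inE //=.
rewrite (set_nth_default y) //=; lia.
Qed.

Lemma sorted_comp_of_set_cuts N S : 0 < N ->
  sorted leq (0 :: rcons [seq i <- iota 1 N.-1 | S i] N).
Proof.
move=> hN; apply: (subseq_sorted leq_trans _ (iota_sorted 0 N.+1)).
have -> : iota 0 N.+1 = 0 :: rcons (iota 1 N.-1) N.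
  by rewrite /= -cats1 -{1}(prednK hN) -[N.-1.+1]addn1 iotaD add1n prednK.
by rewrite /= -!cats1 cat_subseq ?filter_subseq.
Qed.

Lemma sumn_comp_of_set N S : sumn (comp_of_set N S) = N.
Proof.
rewrite /comp_of_set; case: (posnP N) => [-> //|hN].
rewrite -[pairmap _ _ _]take_size sumn_take_pairmap_subn ?sorted_comp_of_set_cuts //.
  by rewrite size_pairmap size_rcons /= nth_rcons ltnn eqxx subn0.
by rewrite size_pairmap.
Qed.

Lemma mem_Ilist_comp_of_set N S i : (i \in Ilist (comp_of_set N S)) = (0 < i < N) && S i.
Proof.
rewrite /comp_of_set; case: (posnP N) => [->|hN]; first by rewrite ltn0 andbF.
set s := [seq j <- iota 1 N.-1 | S j].
suff -> : Ilist (pairmap (fun a b => b - a) 0 (rcons s N)) = s.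
  by rewrite mem_filter mem_iota andbC; congr andb; lia.
rewrite /Ilist size_pairmap size_rcons /= (iotaDl 1 0) -map_comp.
rewrite -[RHS](mkseq_nth 0); apply/eq_in_map => j; rewrite mem_iota /= => hj.
rewrite sumn_take_pairmap_subn ?sorted_comp_of_set_cuts ?size_rcons //; last lia.
by rewrite add0n in hj; rewrite subn0 add1n /= nth_rcons hj.
Qed.

Theorem proposition5p5 (k : fieldType) (w : seq nat) (n : nat) (alpha : seq nat) :
  all (fun x => (0 < x <= n)%N) w ->
  is_comp alpha -> sumn alpha = size w ->
  (forall i : nat, Des w i = (i \in Ilist alpha)) ->
  [/\ Psi k Zle w n = L k alpha,
      Psi k Zgt w n = L k (compl alpha),
      Psi k Zge (rev w) n = L k (rev alpha) &
      Psi k Zlt (rev w) n = L k (transp alpha)].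
Proof.
move=> _ _ hs hD.
have Ilist_rev_alpha i : (i \in Ilist (rev alpha)) = Des w (size w - i).
  rewrite mem_Ilist_rev hs -hD; case: leqP => // /ltnW.
  by rewrite -subn_eq0 => /eqP ->.
have Ilist_compl a i : (i \in Ilist (compl a)) = (0 < i < sumn a) && (i \notin Ilist a).
  exact: mem_Ilist_comp_of_set.
split; apply: Psi_eq_L; rewrite ?sumn_comp_of_set ?sumn_rev ?size_rev // => i.
- by rewrite breaks_Zle hD.
- by rewrite Ilist_compl breaks_Zgt hD hs.
- by rewrite breaks_rev breaks_Zle Ilist_rev_alpha.
- rewrite Ilist_compl Ilist_rev_alpha breaks_rev breaks_Zgt sumn_rev hs.
  by congr andb; lia.
Qed.
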